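(* Let $m$ be even and let $\mathbb{A}\in T_{m,n}$ be a $Z$ tensor. If $\mathbb{A}$ is a $B$ tensor, then $\mathbb{A}$ is a $P$ tensor. If $\mathbb{A}$ is a $B_0$ tensor, then $\mathbb{A}$ is a $P_0$ tensor.
   Context: $T_{m,n}$ denotes the set of real $m$th order $n$-dimensional tensors $\mathbb{A}=(a_{i_1i_2\ldots i_m})$ with $i_j\in[n]=\{1,\ldots,n\}$. $\mathbb{A}$ is a $Z$ tensor if $a_{i_1\ldots i_m}\le0$ whenever $(i_1,\ldots,i_m)$ is not of the form $(i,\ldots,i)$. For $x\in\mathbb{R}^n$, $(\mathbb{A}x^{m-1})_i=\sum_{i_2,\ldots,i_m=1}^n a_{ii_2\ldots i_m}x_{i_2}\cdots x_{i_m}$. $\mathbb{A}$ is a $P$ tensor if for every nonzero $x\in\mathbb{R}^n$, $\max_{i\in[n]}x_i(\mathbb{A}x^{m-1})_i>0$; it is a $P_0$ tensor if for every nonzero $x\in\mathbb{R}^n$ there is $i\in[n]$ with $x_i\ne0$ and $x_i(\mathbb{A}x^{m-1})_i\ge0$. $\mathbb{A}$ is a $B$ tensor if for all $i\in[n]$, $\sum_{i_2,\ldots,i_m=1}^n a_{ii_2\ldots i_m}>0$ and $\frac{1}{n^{m-1}}\sum_{i_2,\ldots,i_m=1}^n a_{ii_2\ldots i_m}>a_{ij_2\ldots j_m}$ for all $(j_2,\ldots,j_m)\neq(i,\ldots,i)$. $\mathbb{A}$ is a $B_0$ tensor if the same two conditions hold with $\ge$ in place of $>$. *)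

From HB Require Import structures.
From mathcomp Require Import all_boot all_order all_algebra.
Set Implicit Arguments. Unset Strict Implicit. Unset Printing Implicit Defensive.
Import Order.TTheory GRing.Theory Num.Theory.
Local Open Scope ring_scope.

(* A real m-th order n-dimensional tensor a_{i i2 ... im} is represented as a
   function of the first index i : 'I_n and the remaining (m-1)-tuple
   (i2,...,im) of indices in 'I_n. *)
Definition tensor (R : realFieldType) (m n : nat) :=
  'I_n -> (m.-1).-tuple 'I_n -> R.

Section Tensors.
Variables (R : realFieldType) (m n : nat).

Definition diag_idx (i : 'I_n) (t : (m.-1).-tuple 'I_n) : bool :=
  all (pred1 i) t.

Definition is_Z_tensor (A : tensor R m n) : Prop :=
  forall i t, ~~ diag_idx i t -> A i t <= 0.

Definition tapply (A : tensor R m n) (x : 'I_n -> R) (i : 'I_n) : R :=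
  \sum_(t : (m.-1).-tuple 'I_n) A i t * \prod_(j <- t) x j.

Definition is_P_tensor (A : tensor R m n) : Prop :=
  forall x : 'I_n -> R, (exists k, x k != 0) ->
    exists i, 0 < x i * tapply A x i.

Definition is_P0_tensor (A : tensor R m n) : Prop :=
  forall x : 'I_n -> R, (exists k, x k != 0) ->
    exists i, x i != 0 /\ 0 <= x i * tapply A x i.

Definition row_sum (A : tensor R m n) (i : 'I_n) : R := \sum_t A i t.

Definition is_B_tensor (A : tensor R m n) : Prop :=
  forall i, 0 < row_sum A i /\
    forall t, ~~ diag_idx i t -> A i t < row_sum A i / (n ^ m.-1)%:R.

Definition is_B0_tensor (A : tensor R m n) : Prop :=
  forall i, 0 <= row_sum A i /\
    forall t, ~~ diag_idx i t -> A i t <= row_sum A i / (n ^ m.-1)%:R.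

End Tensors.

From HB Require Import structures.
From mathcomp Require Import all_boot all_order all_algebra.
Import Order.TTheory GRing.Theory Num.Theory.
Set Implicit Arguments. Unset Strict Implicit. Unset Printing Implicit Defensive.
Local Open Scope ring_scope.

(* Only the row sums of a B (resp. B0) tensor matter here: for a Z tensor and
   a coordinate i where |x| is maximal, every off-diagonal term satisfies
   a_{i t} x_i x_t >= a_{i t} |x_i|^m, and for even m the diagonal term is
   a_{ii..i} |x_i|^m.  Summing over t gives
   x_i (A x^{m-1})_i >= (row sum i) |x_i|^m, which is > 0 (resp. >= 0). *)

Lemma prodr_const_seq (R : pzSemiRingType) (I : Type) (s : seq I) (c : R) :
  \prod_(j <- s) c = c ^+ size s.
Proof. by rewrite big_const_seq count_predT iter_mulr_1. Qed.

Lemma prodr_all_pred1 (R : pzSemiRingType) (I : eqType) (F : I -> R)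
    (i : I) (s : seq I) :
  all (pred1 i) s -> \prod_(j <- s) F j = F i ^+ size s.
Proof.
move=> /allP s_i; rewrite -prodr_const_seq.
by apply: eq_big_seq => j /s_i /eqP ->.
Qed.

Lemma prodr_norm_le_exp (R : numDomainType) (I : Type) (F : I -> R)
    (M : R) (s : seq I) :
  (forall j, `|F j| <= M) -> \prod_(j <- s) `|F j| <= M ^+ size s.
Proof.
move=> le_FM; rewrite -prodr_const_seq.
by apply: ler_prod => j _; rewrite normr_ge0 le_FM.
Qed.

Lemma exists_argmax_norm (R : realDomainType) (n : nat) (x : 'I_n -> R)
    (k : 'I_n) :
  exists i, forall j, `|x j| <= `|x i|.
Proof.
case: (@arg_maxP _ _ _ k xpredT (fun j => `|x j|) isT) => i _ max_i.
by exists i => j; apply: max_i.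
Qed.

Section ZTensor.
Variables (R : realFieldType) (m n : nat) (A : tensor R m n).
Hypotheses (m_gt0 : (0 < m)%N) (m_even : ~~ odd m) (A_Z : is_Z_tensor A).

Lemma row_sum_mul_normX_le_tapply (x : 'I_n -> R) (i : 'I_n) :
  (forall j, `|x j| <= `|x i|) ->
  row_sum A i * `|x i| ^+ m <= x i * tapply A x i.
Proof.
move=> max_i; rewrite /row_sum /tapply mulr_suml mulr_sumr.
apply: ler_sum => t _; rewrite mulrCA.
have m_eq : m = (size t).+1 by rewrite size_tuple prednK.
have [diag_t | off_t] := boolP (diag_idx i t).
  rewrite (prodr_all_pred1 _ diag_t) -exprS -m_eq.
  by rewrite -normrX ger0_norm // exprn_even_ge0.
apply: ler_wnM2l; first exact: A_Z.
apply: le_trans (ler_norm _) _.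
rewrite normrM normr_prod {2}m_eq exprS.
by apply: ler_pM; rewrite ?prodr_ge0 ?prodr_norm_le_exp.
Qed.

Lemma tapply_at_max_norm (x : 'I_n -> R) :
  (exists k, x k != 0) ->
  exists2 i, x i != 0 & row_sum A i * `|x i| ^+ m <= x i * tapply A x i.
Proof.
move=> [k xk_neq0]; have [i max_i] := exists_argmax_norm x k.
exists i; last exact: row_sum_mul_normX_le_tapply.
by rewrite -normr_gt0 (lt_le_trans _ (max_i k)) ?normr_gt0.
Qed.

Lemma Z_tensor_row_sum_gt0_P :
  (forall i, 0 < row_sum A i) -> is_P_tensor A.
Proof.
move=> row_gt0 x /tapply_at_max_norm[i xi_neq0 le_rs]; exists i.
by apply: lt_le_trans le_rs; rewrite mulr_gt0 ?exprn_gt0 ?normr_gt0.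
Qed.

Lemma Z_tensor_row_sum_ge0_P0 :
  (forall i, 0 <= row_sum A i) -> is_P0_tensor A.
Proof.
move=> row_ge0 x /tapply_at_max_norm[i xi_neq0 le_rs]; exists i.
by split=> //; apply: le_trans le_rs; rewrite mulr_ge0 ?exprn_ge0.
Qed.

End ZTensor.

Theorem theorem3p6 (R : realFieldType) (m n : nat) (A : tensor R m n) :
  (2 <= m)%N -> ~~ odd m -> is_Z_tensor A ->
  (is_B_tensor A -> is_P_tensor A) /\ (is_B0_tensor A -> is_P0_tensor A).
Proof.
move=> m_ge2 m_even A_Z; have m_gt0 : (0 < m)%N by apply: leq_trans m_ge2.
split=> A_B.
- by apply: Z_tensor_row_sum_gt0_P => // i; case: (A_B i).
- by apply: Z_tensor_row_sum_ge0_P0 => // i; case: (A_B i).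
Qed.
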